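(* Let $n\ge 2$. For a prime $p$, let $X_p$ be the set of matrices in $\mathrm{SL}(n,\mathbb{F}_p)$ whose characteristic polynomial has a monic factor over $\mathbb{F}_p$ of degree between $1$ and $n-1$ with constant term $1$. Then $|X_p|/|\mathrm{SL}(n,\mathbb{F}_p)|\to 0$ as $p\to\infty$. *)

From HB Require Import structures.
From mathcomp Require Import all_boot all_order all_algebra.
From mathcomp Require Import boolp.
Set Implicit Arguments. Unset Strict Implicit. Unset Printing Implicit Defensive.
Import GRing.Theory Num.Theory.
Local Open Scope ring_scope.

Definition SLset (p n : nat) : {set 'M['F_p]_n} := [set A | \det A == 1].

Definition bad_charpoly (p n : nat) (A : 'M['F_p]_n) : Prop :=
  exists q : {poly 'F_p},
    [/\ q \is monic, (1 <= (size q).-1 <= n.-1)%N, q %| char_poly A & q`_0 = 1].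

Definition Xset (p n : nat) : {set 'M['F_p]_n} :=
  [set A in SLset p n | `[< bad_charpoly A >]].

Definition Xratio (p n : nat) : rat := (#|Xset p n|%:R / #|SLset p n|%:R).

From HB Require Import structures.
From mathcomp Require Import all_boot all_order all_algebra.
From mathcomp Require Import boolp.
From mathcomp Require Import fieldext.
Import Order.TTheory GRing.Theory Num.Theory.
Local Open Scope ring_scope.
Set Implicit Arguments. Unset Strict Implicit. Unset Printing Implicit Defensive.

(* If a monic factor g of degree d of the characteristic polynomial of A has
   g(0) = 1, then A stabilises a d-dimensional subspace on which it has
   characteristic polynomial g (split off companion blocks of irreducible
   factors of g, built from Krylov bases), hence determinant (-1)^d.  So A is
   conjugate in SL(n, F_q) into the set T_c of block lower triangular matrices
   whose upper left block has determinant c = (-1)^d.  Double counting the pairs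
   (A, g) with g A g^-1 in T_c, using that the conjugators of such an A contain
   a coset of the parabolic subgroup P, and that multiplying by block diagonal
   dilations shows |P| >= (q - 1) |T_c|, gives at most |SL(n, F_q)| / (q - 1)
   such A for each d.  Hence |X_p| / |SL(n, F_p)| <= (n - 1) / (p - 1). *)

(** * Stable subspaces with a prescribed characteristic polynomial *)

Lemma char_poly_lblock (R : comNzRingType) m1 m2 (A1 : 'M[R]_m1)
    (A3 : 'M[R]_(m2, m1)) (A4 : 'M[R]_m2) :
  char_poly (block_mx A1 0 A3 A4) = char_poly A1 * char_poly A4.
Proof.
rewrite /char_poly /char_poly_mx map_block_mx /= map_mx0.
by rewrite scalar_mx_block opp_block_mx add_block_mx oppr0 addr0 det_lblock.
Qed.

Lemma horner_mx_eigen (R : comNzRingType) n (A : 'M[R]_n.+1) (v : 'rV_n.+1)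
    a p :
  v *m A = a *: v -> v *m horner_mx A p = p.[a] *: v.
Proof.
move=> vA; elim/poly_ind: p => [|p c IHp].
  by rewrite rmorph0 mulmx0 horner0 scale0r.
rewrite rmorphD rmorphM /= horner_mx_X horner_mx_C hornerMXaddC.
by rewrite mulmxDr mulmxA IHp -scalemxAl vA scalerA mul_mx_scalar scalerDl.
Qed.

Lemma eigenpoly_root (F : fieldType) n (A : 'M[F]_n) a p :
  eigenvalue A a -> root p a -> eigenpoly A p.
Proof.
case: n A => [|n] A /eigenvalueP[v vA vn0] pa; apply/eigenpolyP; exists v => //.
  by rewrite thinmx0 eqxx in vn0.
by apply/sub_kermxP; rewrite (horner_mx_eigen _ vA) (rootP pa) scale0r.
Qed.

Lemma horner_mx_sum (R : comNzRingType) n (A : 'M[R]_n.+1) (p : {poly R}) m :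
  (size p <= m)%N -> horner_mx A p = \sum_(i < m) p`_i *: A ^+ i.
Proof.
move=> spm; rewrite -{1}[p]coefK poly_def rmorph_sum /=.
rewrite (big_ord_widen m (fun i => horner_mx A (p`_i *: 'X^i))) // big_mkcond /=.
apply: eq_bigr => i _; case: ltnP => [_ | /(nth_default 0) ->].
  by rewrite horner_mxZ rmorphXn /= horner_mx_X.
by rewrite scale0r.
Qed.

Section StableSubspaces.
Variable F : fieldType.

Lemma char_poly_uconj n (g A : 'M[F]_n) : g \in unitmx ->
  char_poly (g *m A *m invmx g) = char_poly A.
Proof.
move=> gu; rewrite /char_poly /char_poly_mx.
have -> : 'X%:M - map_mx polyC (g *m A *m invmx g) =
    map_mx polyC g *m ('X%:M - map_mx polyC A) *m map_mx polyC (invmx g).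
  rewrite mulmxBr mulmxBl !map_mxM /= mul_mx_scalar -scalemxAl; congr (_ - _).
  by rewrite -map_mxM mulmxV // map_mx1 scalemx1.
rewrite !det_mulmx !det_map_mx det_inv mulrC mulrA -rmorphM /=.
by rewrite mulVf ?mul1r // -unitfE -unitmxE.
Qed.

Lemma eigenpoly_irreducible n (A : 'M[F]_n) f :
  irreducible_poly f -> f %| char_poly A -> eigenpoly A f.
Proof.
move=> fI /dvdpP[r chA]; have [L _ [z fz _]] := irredp_FAdjoin fI.
(* A root z of f in the extension F(z) is an eigenvalue of A over F(z). *)
rewrite -(eigenpoly_map (in_alg L)); apply: (eigenpoly_root _ fz).
by rewrite eigenvalue_root_char -map_char_poly chA rmorphM rootM fz orbT.
Qed.

Lemma monic_irreducible_factor (q : {poly F}) : (1 < size q)%N ->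
  exists f, [/\ irreducible_poly f, f \is monic & f %| q].
Proof.
have [m] := ubnP (size q); elim: m q => // m IHm q sqm sq.
have q0 : q != 0 by rewrite -size_poly_gt0 ltnW.
have [qI | qNI] := pselect (irreducible_poly q).
  have lq0 : (lead_coef q)^-1 != 0 by rewrite invr_eq0 lead_coef_eq0.
  exists ((lead_coef q)^-1 *: q); split.
  - split=> [|r sr]; first by rewrite size_scale.
    rewrite dvdpZr // => /(qI _ sr) rq; apply: eqp_trans rq _.
    by rewrite eqp_sym eqp_scale.
  - by rewrite monicE lead_coefZ mulVf ?lead_coef_eq0.
  - by rewrite dvdpZl.
have [r [sr1 rq rNq]] :
    exists r : {poly F}, [/\ size r != 1, r %| q & ~ r %= q].
  apply: contrapT => noDiv; apply: qNI; split=> // r sr rq.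
  by apply: contrapT => rNq; apply: noDiv; exists r.
have r0 : r != 0 by apply: contraNneq q0 => r0; rewrite -(dvd0p q) -r0.
have srq : (size r < size q)%N.
  rewrite ltn_neqAle dvdp_leq // andbT; apply: contra_notN rNq.
  by rewrite -dvdp_size_eqp.
have sr : (1 < size r)%N.
  by move: sr1; rewrite -size_poly_gt0 in r0; case: (size r) r0 => [|[|]].
have [f [fI fm fr]] := IHm r (leq_trans srq sqm) sr.
by exists f; split=> //; apply: dvdp_trans rq.
Qed.

Lemma row_free_completion k e (K : 'M[F]_(k, k + e)) : row_free K ->
  exists W : 'M[F]_(e, k + e), col_mx K W \in unitmx.
Proof.
move=> Kfree.
have rkC : \rank K^C%MS = e by rewrite mxrank_compl (eqP Kfree) addKn.
exists (castmx (rkC, erefl) (row_base K^C%MS)).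
have KW : (col_mx K (castmx (rkC, erefl) (row_base K^C%MS)) :=: K + K^C)%MS.
  apply: eqmx_trans (eqmx_sym (addsmxE _ _)) (adds_eqmx (eqmx_refl K) _).
  exact: eqmx_trans (eqmx_cast _ _) (eq_row_base _).
by rewrite -row_full_unit /row_full KW.1; apply: addsmx_compl_full.
Qed.

Lemma stable_lblock_uconj k e (K : 'M[F]_(k, k + e)) (A : 'M_(k + e))
    (B : 'M_k) :
  row_free K -> K *m A = B *m K ->
  exists g M3 M4, g \in unitmx /\ g *m A *m invmx g = block_mx B 0 M3 M4.
Proof.
move=> Kfree KA; have [W gu] := row_free_completion Kfree.
set g := col_mx K W in gu; set M := g *m A *m invmx g.
have [Mul Mur] : ulsubmx M = B /\ ursubmx M = 0.
  have : usubmx M *m g = row_mx B 0 *m g.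
    rewrite mul_usub_mx mulmxKV // mul_col_mx col_mxKu KA.
    by rewrite mul_row_col mul0mx addr0.
  by rewrite -[usubmx M]hsubmxK => /(can_inj (mulmxK gu))/eq_row_mx.
by exists g, (dlsubmx M), (drsubmx M); rewrite -/M -{1}[M]submxK Mul Mur.
Qed.

Section Krylov.
Variables (n : nat) (A : 'M[F]_n.+1) (f : {poly F}) (w : 'rV[F]_n.+1).
Hypothesis wf : w *m horner_mx A f = 0.
Local Notation d := (size f).-1.

Definition krylov_mx : 'M[F]_(d, n.+1) := \matrix_(i < d) (w *m A ^+ i).

Lemma mul_krylov_mx (v : 'rV_d) : v *m krylov_mx = w *m horner_mx A (rVpoly v).
Proof.
rewrite (horner_mx_sum _ (size_poly _ _)) mulmx_sumr mulmx_sum_row.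
by apply: eq_bigr => i _; rewrite coef_rVpoly_ord rowK scalemxAr.
Qed.

Lemma krylov_mx_free : irreducible_poly f -> w != 0 -> row_free krylov_mx.
Proof.
move=> fI wn0; apply: inj_row_free => v vK0.
(* rVpoly v kills w and has degree < deg f, so it is coprime to f. *)
have [v0 | vn0] := eqVneq (rVpoly v) 0; first by rewrite -[v]rVpolyK v0 linear0.
have ltvf : (size (rVpoly v) < size f)%N.
  by rewrite (leq_ltn_trans (size_poly _ _)) // ltn_predL; case: fI => /ltnW.
have fv : coprimep f (rVpoly v).
  rewrite irreducible_poly_coprime //; apply: contraL ltvf.
  by move=> /(dvdp_leq vn0); rewrite leqNgt.
have : (w <= kermxpoly A f :&: kermxpoly A (rVpoly v))%MS.
  rewrite sub_capmx; apply/andP.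
  by split; apply/sub_kermxP; rewrite -?mul_krylov_mx.
by rewrite mxdirect_kermxpoly // submx0 (negPf wn0).
Qed.

Lemma krylov_mx_stable : f \is monic ->
  krylov_mx *m A = companionmx f *m krylov_mx.
Proof.
move=> fm; apply/row_matrixP => i.
rewrite row_mul rowK -mulmxA -[A ^+ i *m A]/(A ^+ i * A) -exprSr row_mul.
have [lt_i1_d | ge_i1_d] := ltnP i.+1 d.
  by rewrite rowE mulmx_delta_companion -rowE rowK.
have Ei : i.+1 = d by apply/anti_leq; rewrite ge_i1_d ltn_ord.
(* In the last row, w A^d = - \sum_(j < d) f_j w A^j as f is monic and kills w. *)
have := wf; rewrite (horner_mx_sum _ (leqSpred _)) big_ord_recr /=.
rewrite -lead_coefE (monicP fm) scale1r mulmxDr addrC => /eqP.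
rewrite addr_eq0 => /eqP; rewrite {1}Ei => ->.
rewrite [RHS]mulmx_sum_row mulmx_sumr -sumrN.
apply: eq_bigr => j _; rewrite !mxE.
have -> : (i == d.-1 :> nat) by rewrite -(congr1 predn Ei).
by rewrite rowK -scalemxAr scaleNr.
Qed.

End Krylov.

Lemma companion_stable_subspace n (A : 'M[F]_n) f :
    irreducible_poly f -> f \is monic -> f %| char_poly A ->
  exists K : 'M[F]_((size f).-1, n), row_free K /\ K *m A = companionmx f *m K.
Proof.
case: n A => [|n] A fI fm fA.
  case: fI => sf _.
  by rewrite /char_poly det_mx00 dvdp1 eq_sym (ltn_eqF sf) in fA.
have /eigenpolyP[w /sub_kermxP wf wn0] := eigenpoly_irreducible fI fA.
by exists (krylov_mx A f w); rewrite krylov_mx_free // krylov_mx_stable.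
Qed.

Lemma stable_conjmx m n (U : 'M[F]_(m, n)) A B : row_free U ->
  U *m A = B *m U -> stablemx U A /\ conjmx U A = B.
Proof. by move=> Ufree UA; rewrite /conjmx UA submxMl mulmxKp. Qed.

Lemma stable_lblock k e d (C : 'M[F]_k) (M3 : 'M_(e, k)) (M4 : 'M_e)
    (U : 'M_(d, e)) (B : 'M_d) :
  row_free U -> U *m M4 = B *m U ->
  row_free (block_mx (1%:M : 'M_k) 0 0 U) /\
  block_mx (1%:M : 'M_k) 0 0 U *m block_mx C 0 M3 M4 =
    block_mx C 0 (U *m M3) B *m block_mx (1%:M : 'M_k) 0 0 U.
Proof.
move=> /row_freeP[V UV] UM4; split.
  apply/row_freeP; exists (block_mx 1%:M 0 0 V).
  rewrite mulmx_block !(mulmx0, mul0mx, mulmx1, addr0, add0r) UV.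
  by rewrite -scalar_mx_block.
by rewrite !mulmx_block !(mulmx0, mul0mx, mulmx1, mul1mx, addr0, add0r) UM4.
Qed.

Theorem stable_subspace_char_poly n (A : 'M[F]_n) q :
    q \is monic -> q %| char_poly A ->
  exists d (U : 'M[F]_(d, n)),
    [/\ row_free U, stablemx U A & char_poly (conjmx U A) = q].
Proof.
elim/ltn_ind: n A q => n IHn A q qm qA.
have [sq | sq] := ltnP 1 (size q); last first.
  have -> : q = 1.
    apply/eqP; rewrite -eqp_monic ?monic1 // -size_poly_eq1.
    by rewrite eqn_leq sq size_poly_gt0 monic_neq0.
  exists 0%N, 0; split; rewrite /row_free ?mxrank0 ?mul0mx ?sub0mx //.
  by rewrite /char_poly det_mx00.
(* Split off the companion block of an irreducible factor f of q, then
   recurse on q %/ f in the complementary diagonal block. *)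
have [f [fI fm fq]] := monic_irreducible_factor sq.
have [K [Kfree KA]] := companion_stable_subspace fI fm (dvdp_trans fq qA).
have [e def_n] : exists e, n = ((size f).-1 + e)%N.
  by exists (n - (size f).-1)%N; rewrite subnKC // -(eqP Kfree) rank_leq_col.
subst n; have [g [M3 [M4 [gu defM]]]] := stable_lblock_uconj Kfree KA.
have chA : char_poly A = f * char_poly M4.
  by rewrite -(char_poly_uconj A gu) defM char_poly_lblock companionmxK.
have defq : q = q %/ f * f by rewrite divpK.
have q'm : q %/ f \is monic by rewrite -(monicMr _ fm) -defq.
have q'M : q %/ f %| char_poly M4.
  by rewrite -(dvdp_mul2r _ _ (monic_neq0 fm)) -defq mulrC -chA.
have lt_e : (e < (size f).-1 + e)%N.
  by rewrite -{1}[e]add0n ltn_add2r ltn_predRL; case: fI.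
have [d [U [Ufree /mulmxKpV UM4 chU]]] := IHn _ lt_e _ _ q'm q'M.
have [Vfree VM] := stable_lblock (companionmx f) M3 Ufree (esym UM4).
set V := block_mx _ 0 0 U in Vfree VM.
have VgA : V *m g *m A =
    block_mx (companionmx f) 0 (U *m M3) (conjmx U M4) *m (V *m g).
  by rewrite -mulmxA -[g *m A](mulmxKV gu) defM mulmxA VM -[LHS]mulmxA.
have Vgfree : row_free (V *m g) by rewrite /row_free mxrankMfree ?row_free_unit.
have [stab conjE] := stable_conjmx Vgfree VgA.
exists ((size f).-1 + d)%N, (V *m g); split=> //.
by rewrite conjE char_poly_lblock companionmxK // chU mulrC -defq.
Qed.

End StableSubspaces.

(** * Counting matrices with a stable subspace in SL(n, F_q) *)

Section LowerBlockTriangular.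
Variables (R : comNzRingType) (m1 m2 : nat).
Implicit Types X Y : 'M[R]_(m1 + m2).

Lemma ursubmx_mul0 X Y :
  ursubmx X = 0 -> ursubmx Y = 0 -> ursubmx (X *m Y) = 0.
Proof.
move=> X0 Y0; rewrite -[X]submxK -[Y]submxK X0 Y0 mulmx_block block_mxKur.
by rewrite mulmx0 mul0mx addr0.
Qed.

Lemma ulsubmx_mul X Y :
  ursubmx X = 0 -> ulsubmx (X *m Y) = ulsubmx X *m ulsubmx Y.
Proof.
move=> X0; rewrite -[X]submxK -[Y]submxK X0 mulmx_block block_mxKul.
by rewrite !block_mxKul mul0mx addr0.
Qed.

Lemma det_lblock_submx X :
  ursubmx X = 0 -> \det X = \det (ulsubmx X) * \det (drsubmx X).
Proof. by move=> X0; rewrite -{1}[X]submxK X0 det_lblock. Qed.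

End LowerBlockTriangular.

Lemma ursubmx_invmx0 (F : fieldType) m1 m2 (X : 'M[F]_(m1 + m2)) :
  ursubmx X = 0 -> ursubmx (invmx X) = 0.
Proof.
move=> X0; have [Xu | /invmx_out -> //] := boolP (X \in unitmx).
have : \det X != 0 by rewrite -unitfE -unitmxE.
rewrite det_lblock_submx // mulf_eq0 negb_or => /andP[_ drX].
have drXu : drsubmx X \in unitmx by rewrite unitmxE unitfE.
have : ursubmx (invmx X *m X) = ursubmx (invmx X) *m drsubmx X.
  rewrite -[invmx X]submxK -[X in _ *m X]submxK X0 mulmx_block !block_mxKur.
  by rewrite mulmx0 add0r.
rewrite mulVmx // (scalar_mx_block m1 m2) block_mxKur.
by move=> /esym /(canRL (mulmxK drXu)); rewrite mul0mx.
Qed.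

Lemma det_conjmx (F : fieldType) n (g A : 'M[F]_n) :
  g \in unitmx -> \det (conjmx g A) = \det A.
Proof.
move=> gu; rewrite conjumx // !det_mulmx det_inv mulrAC divff ?mul1r //.
by rewrite -unitfE -unitmxE.
Qed.

Definition dilation_mx (R : nzRingType) m (a : R) : 'M[R]_m.+1 :=
  diag_mx (\row_i (if i == ord0 then a else 1)).

Lemma det_dilation_mx (R : comNzRingType) m (a : R) : \det (dilation_mx m a) = a.
Proof.
rewrite det_diag big_ord_recl !mxE eqxx big1 ?mulr1 // => i _.
by rewrite !mxE eq_sym (negPf (neq_lift ord0 i)).
Qed.

Lemma double_count_leq (T U : finType) (A : {set T}) (B : {set U})
    (r : T -> U -> bool) (a b : nat) :
  {in A, forall x, a <= #|[set y in B | r x y]|}%N ->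
  {in B, forall y, #|[set x | r x y]| <= b}%N ->
  (#|A| * a <= #|B| * b)%N.
Proof.
move=> rA rB.
have leA : (\sum_(x in A) a <= \sum_(x in A) #|[set y in B | r x y]|)%N.
  exact: leq_sum.
have leB : (\sum_(y in B) #|[set x in A | r x y]| <= \sum_(y in B) b)%N.
  apply: leq_sum => y yB; apply: leq_trans (rB y yB).
  by apply/subset_leq_card/subsetP => x; rewrite !inE => /andP[].
have swap : \sum_(x in A) #|[set y in B | r x y]| =
              \sum_(y in B) #|[set x in A | r x y]|.
  under eq_bigr do rewrite -sum1dep_card.
  rewrite (exchange_big_dep (mem B)) /= => [|x y _ /andP[] //].
  apply: eq_bigr => y yB; rewrite -sum1dep_card; apply: eq_bigl => x.
  by rewrite yB.
by rewrite -!sum_nat_const (leq_trans leA) ?swap.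
Qed.

Lemma card_bigcup_leq (I T : finType) (P : pred I) (G : I -> {set T}) :
  (#|\bigcup_(i | P i) G i| <= \sum_(i | P i) #|G i|)%N.
Proof.
elim/big_ind2: _ => [|n1 A1 n2 A2 le1 le2|]; rewrite ?cards0 //.
exact: leq_trans (leq_card_setU A1 A2).1 (leq_add le1 le2).
Qed.

Section ParabolicCount.
Variable F : finFieldType.
Local Notation SL n := [set A : 'M[F]_n | \det A == 1].

Definition stable_det_set n d (c : F) : {set 'M[F]_n} :=
  [set A in SL n | `[< exists U : 'M_(d, n),
      [/\ row_free U, stablemx U A & \det (conjmx U A) = c] >]].

Variables d e : nat.
Local Notation n := (d.+1 + e.+1)%N.

Definition parabolic : {set 'M[F]_n} := [set h in SL n | ursubmx h == 0].
Definition parabolic_ul (c : F) : {set 'M[F]_n} :=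
  [set M in parabolic | \det (ulsubmx M) == c].

Definition block_dilation (a b : F) : 'M[F]_n :=
  block_mx (dilation_mx d a) 0 0 (dilation_mx e b).

Lemma block_dilationE a b : [/\ ursubmx (block_dilation a b) = 0,
  \det (ulsubmx (block_dilation a b)) = a & \det (block_dilation a b) = a * b].
Proof. by rewrite block_mxKur block_mxKul det_lblock !det_dilation_mx. Qed.

Lemma block_dilation_parabolic_ul c :
  c != 0 -> block_dilation c c^-1 \in parabolic_ul c.
Proof.
move=> c0; have [ur ul dt] := block_dilationE c c^-1.
by rewrite !inE ur ul dt divff ?eqxx.
Qed.

Lemma conjmx_parabolic_ul c h M : h \in unitmx -> ursubmx h = 0 ->
  M \in parabolic_ul c -> conjmx h M \in parabolic_ul c.
Proof.
move=> hu h0; rewrite !inE det_conjmx // conjumx //.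
case/andP=> /andP[-> /eqP M0] /eqP <-.
rewrite !ursubmx_mul0 ?ursubmx_invmx0 // eqxx !ulsubmx_mul ?ursubmx_mul0 //.
rewrite !det_mulmx mulrAC -det_mulmx -ulsubmx_mul // mulmxV //.
by rewrite (scalar_mx_block d.+1 e.+1) block_mxKul det1 mul1r eqxx.
Qed.

Lemma card_parabolic_ul c :
  c != 0 -> (#|parabolic_ul c| * #|F|.-1 <= #|parabolic|)%N.
Proof.
(* Left multiplication by block_dilation a a^-1 sends parabolic_ul c into
   parabolic_ul (a * c); these sets are disjoint for distinct a != 0. *)
move=> c0; pose phi (x : F * 'M[F]_n) := block_dilation x.1 x.1^-1 *m x.2.
have detul a M : M \in parabolic_ul c -> \det (ulsubmx (phi (a, M))) = a * c.
  have [D0 Dul _] := block_dilationE a a^-1.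
  by rewrite !inE => /andP[_ /eqP <-]; rewrite ulsubmx_mul // det_mulmx Dul.
rewrite -(cardsC1 (0 : F)) mulnC -cardsX -(@card_in_imset _ _ phi).
  apply/subset_leq_card/subsetP => _ /imsetP[[a M] /setXP[a0 cM] ->].
  move: (cM) a0; rewrite !inE => /andP[/andP[M1 /eqP M0] _] a0.
  have [D0 _ Ddet] := block_dilationE a a^-1.
  by rewrite /phi /= det_mulmx Ddet divff // mul1r M1 ursubmx_mul0 ?eqxx.
move=> [a M] [b N] /setXP[/= a0 cM] /setXP[/= b0 cN] eq_phi.
have eq_ab : a = b by apply: (mulIf c0); rewrite -(detul a M) // eq_phi detul.
move: eq_phi; rewrite /phi /= eq_ab => /(can_inj (mulKmx _)) -> //.
have [_ _ Ddet] := block_dilationE b b^-1.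
by rewrite unitmxE Ddet unitfE divff ?oner_eq0 //; rewrite !inE in b0.
Qed.

Lemma conj_parabolic_ul c A : A \in stable_det_set n d.+1 c ->
  exists2 g, g \in SL n & conjmx g A \in parabolic_ul c.
Proof.
rewrite !inE => /andP[A1 /asboolP[U [Ufree /mulmxKpV UA detU]]].
have [g0 [M3 [M4 [g0u defM]]]] := stable_lblock_uconj Ufree (esym UA).
have g0A : conjmx g0 A \in parabolic_ul c.
  rewrite !inE det_conjmx // A1 conjumx // defM.
  by rewrite block_mxKur block_mxKul detU !eqxx.
(* Rescale the last block of rows of g0 to make its determinant 1. *)
have [h0 _ hdet] := block_dilationE 1 (\det g0)^-1.
have dg0 : \det g0 != 0 by rewrite -unitfE -unitmxE.
have hu : block_dilation 1 (\det g0)^-1 \in unitmx.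
  by rewrite unitmxE hdet mul1r unitfE invr_eq0.
exists (block_dilation 1 (\det g0)^-1 *m g0).
  by rewrite inE det_mulmx hdet mul1r mulVf.
by rewrite conjuMumx // conjmx_parabolic_ul.
Qed.

Lemma card_stable_det_set_block c : c != 0 ->
  (#|stable_det_set n d.+1 c| * #|F|.-1 <= #|SL n|)%N.
Proof.
move=> c0; have SLu g : g \in SL n -> g \in unitmx.
  by rewrite inE unitmxE unitfE => /eqP ->; apply: oner_neq0.
(* The g in SL n conjugating a given A into parabolic_ul c contain a coset of
   parabolic, while a given g conjugates at most #|parabolic_ul c| matrices
   into parabolic_ul c. *)
have count : (#|stable_det_set n d.+1 c| * #|parabolic| <=
              #|SL n| * #|parabolic_ul c|)%N.
  apply: (double_count_leq (r := fun A g => conjmx g A \in parabolic_ul c)).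
    move=> A /conj_parabolic_ul[g0 g0S g0A].
    rewrite -(card_imset _ (can_inj (mulmxK (SLu g0 g0S)))).
    apply/subset_leq_card/subsetP => _ /imsetP[h hP ->].
    rewrite !inE in hP; case/andP: hP => /eqP h1 /eqP h0.
    have hu : h \in unitmx by rewrite unitmxE h1 unitr1.
    have hg0 : h *m g0 \in SL n.
      by rewrite inE det_mulmx h1 mul1r; rewrite inE in g0S.
    by rewrite inE hg0 conjuMumx ?(SLu g0) // conjmx_parabolic_ul.
  move=> g /SLu gu.
  exact/eq_leq/(card_preimset _ (can_inj (fun A => conjmxK A gu))).
have Pc0 : (0 < #|parabolic_ul c|)%N.
  apply/card_gt0P; exists (block_dilation c c^-1).
  exact: block_dilation_parabolic_ul.
rewrite -(leq_pmul2r Pc0) -mulnA; apply: leq_trans count.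
by rewrite leq_mul2l mulnC card_parabolic_ul ?orbT.
Qed.

End ParabolicCount.

Lemma card_stable_det_set (F : finFieldType) n d (c : F) :
  (0 < d < n)%N -> c != 0 ->
  (#|stable_det_set n d c| * #|F|.-1 <= #|[set A : 'M[F]_n | \det A == 1%R]|)%N.
Proof.
case: d => // d /= lt_dn; have [e ->] : exists e, n = (d.+1 + e.+1)%N.
  by exists (n - d.+2)%N; rewrite addnS -addSn subnKC.
exact: card_stable_det_set_block.
Qed.

(** * The proportion of X_p in SL(n, F_p) *)

Lemma Xset_sub_stable_det_set p n :
  Xset p n \subset \bigcup_(d < n.-1) stable_det_set n d.+1 ((-1) ^+ d.+1).
Proof.
apply/subsetP => A; rewrite inE => /andP[A1 /asboolP[q [qm /andP[q1 qn] qA q0]]].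
have [k [U [Ufree UA chU]]] := stable_subspace_char_poly qm qA.
have def_k : (size q).-1 = k by rewrite -chU size_char_poly.
rewrite def_k in q1 qn.
case: k def_k q1 qn U Ufree UA chU => // k _ _ lt_kn U Ufree UA chU.
apply/bigcupP; exists (Ordinal lt_kn) => //=; rewrite inE A1; apply/asboolP.
exists U; split=> //; have := char_poly_det (conjmx U A).
by rewrite chU q0 => /(congr1 (GRing.mul ((-1) ^+ k.+1))); rewrite signrMK mulr1.
Qed.

Lemma card_Xset p n : prime p -> (#|Xset p n| * p.-1 <= n.-1 * #|SLset p n|)%N.
Proof.
move=> pp; rewrite -[p in p.-1](card_Fp pp).
pose Y (d : 'I_n.-1) := stable_det_set n d.+1 ((-1) ^+ d.+1 : 'F_p).
apply: (@leq_trans ((\sum_d #|Y d|) * #|'F_p|.-1)).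
  rewrite leq_mul2r; apply/orP; right.
  apply: leq_trans (card_bigcup_leq _ _).
  exact: subset_leq_card (Xset_sub_stable_det_set p n).
apply: (@leq_trans (\sum_(d < n.-1) #|SLset p n|)).
  rewrite big_distrl /=; apply: leq_sum => d _.
  by apply: card_stable_det_set; rewrite ?signr_eq0 //= -ltn_predRL.
by rewrite sum_nat_const card_ord.
Qed.

Lemma Xratio_le p n : prime p -> Xratio p n <= n.-1%:R / p.-1%:R.
Proof.
move=> pp; have p1 : (0 < p.-1)%N by rewrite -ltnS prednK ?prime_gt1 ?prime_gt0.
have SL0 : (0 < #|SLset p n|)%N by apply/card_gt0P; exists 1%:M; rewrite inE det1.
rewrite /Xratio ler_pdivlMr ?ltr0n // mulrAC ler_pdivrMr ?ltr0n //.
by rewrite -!natrM ler_nat card_Xset.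
Qed.

Theorem corollary6p2 (n : nat) (hn : (2 <= n)%N) :
  forall eps : rat, 0 < eps ->
  exists N : nat, forall p : nat, prime p -> (N < p)%N -> Xratio p n < eps.
Proof.
(* Xratio_le holds for every n. *)
move=> eps eps0; have bound0 : 0 <= n.-1%:R / eps by rewrite divr_ge0 ?ler0n ?ltW.
exists (Num.Def.archi_bound (n.-1%:R / eps)) => p pp ltNp.
apply: le_lt_trans (Xratio_le n pp) _.
have p1 : (0 < p.-1)%N by rewrite -ltnS prednK ?prime_gt1 ?prime_gt0.
have := archi_boundP bound0; rewrite ltr_pdivrMr // => ltn1N.
rewrite ltr_pdivrMr ?ltr0n //; apply: lt_le_trans ltn1N _.
by rewrite mulrC ler_pM2l // ler_nat -ltnS prednK ?prime_gt0.
Qed.
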